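(* Let $m\ge 2$ be an integer, and let $A\ge 1$, $B\ge 0$, $C\ge 1$ be integers such that $p(An+B)\equiv 0 \pmod{C}$ for all integers $n\ge 0$. If $B<A$ and $A\mid m$, then for every positive integer $k$ and every integer $n\ge 0$, $$p_{\rho,m}(An+B,k)\equiv 0 \pmod{C}.$$
   Context: $p(n)$ denotes the number of partitions of $n$. Part-frequency matrices: fix an integer modulus $m\ge 2$. Every positive integer $N$ can be written uniquely as $N=jm^k$ with $k\ge 0$ and $m\nmid j$. For a partition $\lambda$, write the number of times the part $N$ occurs in base $m$ as $\sum_{\ell\ge 0} a_{N,\ell}m^\ell$ with digits $a_{N,\ell}\in\{0,\dots,m-1\}$. For each $j\ge 1$ with $m\nmid j$, let $M_j$ be the infinite matrix, with rows and columns indexed from $0$, whose entry in row $k$, column $\ell$ is $a_{jm^k,\ell}$. The partition is recovered from the sequence $(M_j)$; an entry $a$ at position $(k,\ell)$ of $M_j$ contributes $a\cdot j\cdot m^{k+\ell}$ to the weight of the partition, so entries on the same antidiagonal $k+\ell=\text{const}$ contribute in the same unit. The map $\rho$ (depending on $m$): apply to every matrix $M_j$ the following rotation of each antidiagonal. The entry at position $(k,\ell)$ with $\ell\ge 1$ moves to position $(k+1,\ell-1)$, and the entry at position $(k,0)$ moves to position $(0,k)$. The resulting sequence of matrices defines a new partition of the same integer, so $\rho$ is a permutation of the finite set of partitions of $n$. The orbit size of a partition is the size of its orbit under $\rho$. $p_{\rho,m}(n,k)$ denotes the number of partitions of $n$ lying in orbits of size $k$ under $\rho$ with modulus $m$.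 *)

From mathcomp Require Import all_boot.
Set Implicit Arguments. Unset Strict Implicit. Unset Printing Implicit Defensive.

(* Partitions of n, encoded by their multiplicity functions:
   f i = number of times the part i occurs (1 <= i <= n), f 0 = 0,
   and sum_i i * f i = n.  Multiplicities are at most n, so 'I_n.+1 suffices. *)
Definition is_part n (f : {ffun 'I_n.+1 -> 'I_n.+1}) : bool :=
  (f ord0 == ord0) && (\sum_(i < n.+1) i * f i == n).

Definition partn n := {f : {ffun 'I_n.+1 -> 'I_n.+1} | is_part f}.

Definition p (n : nat) : nat := #|{: partn n}|.

Definition mult n (la : partn n) (N : nat) : nat :=
  if (0 < N) && (N <= n) then nat_of_ord (sval la (inord N)) else 0.

(* m-adic valuation: largest k with m^k | N  (N >= 1 gives N = j m^k, m not | j) *)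
Definition mval (m N : nat) : nat := \max_(k < N.+1 | m ^ k %| N) k.
Definition mfree (m N : nat) : nat := N %/ m ^ mval m N.

(* entry (k, l) of the matrix M_j of a multiplicity function g :
   l-th base-m digit of the multiplicity of the part j*m^k *)
Definition pfm (m : nat) (g : nat -> nat) (j k l : nat) : nat :=
  (g (j * m ^ k) %/ m ^ l) %% m.

(* entry (k, l) of the rotated matrix: the entry at (k,l), l>=1, moves to
   (k+1,l-1) and the entry at (k,0) moves to (0,k). *)
Definition pfm_rot (m : nat) (g : nat -> nat) (j k l : nat) : nat :=
  if k is k'.+1 then pfm m g j k' l.+1 else pfm m g j l 0.

(* new multiplicity of the part N = j m^k after rotation; the base-m
   expansion is summed over digit positions l <= n, which is exact for
   multiplicity functions of partitions of n (all further digits vanish). *)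
Definition rho_mult (m n : nat) (g : nat -> nat) (N : nat) : nat :=
  \sum_(l < n.+1) pfm_rot m g (mfree m N) (mval m N) l * m ^ l.

Definition rho_ffun (m n : nat) (la : partn n) : {ffun 'I_n.+1 -> 'I_n.+1} :=
  [ffun i : 'I_n.+1 => if i == ord0 then ord0
                       else inord (rho_mult m n (mult la) i)].

(* the map rho on partitions of n (the insubd default is never used, since
   rho sends partitions of n to partitions of n) *)
Definition rho (m n : nat) (la : partn n) : partn n := insubd la (rho_ffun m la).

Definition p_rho (m n k : nat) : nat :=
  #|[pred la : partn n | order (rho m (n:=n)) la == k]|.

From Pilot Require Import Defs.
From mathcomp Require Import all_boot zify.
Import Defs. (* [Defs.partn] is shadowed by [prime.partn]. *)
Set Implicit Arguments. Unset Strict Implicit. Unset Printing Implicit Defensive.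

(* A partition splits uniquely as E + D, where D keeps, for every part not divisible by m,
   the last base-m digit of its multiplicity, and E is the rest; E is then a partition of a
   multiple m t of m. These digits are exactly the entries at position (0,0) of the matrices
   M_j, which rho fixes, so rho acts on E alone and E + D has the orbit size of E. Hence
   p_rho(N,k) = sum_t p_rho^E(m t,k) d(N - m t) and p(N) = sum_t p^E(m t) d(N - m t), where
   d counts the partitions of type D. When A | m and B < A, N - m t stays in the progression
   A n + B, so strong induction on n in the second identity gives C | d(A n + B), and the
   first identity then gives the theorem. *)

Definition multfun n (g : nat -> nat) :=
  [/\ g 0 = 0, forall i, n < i -> g i = 0 & \sum_(i < n.+1) i * g i = n].

Lemma sum_ord_trunc a c (F : nat -> nat) : c <= a -> (forall k, c <= k -> F k = 0) ->
  \sum_(k < a) F k = \sum_(k < c) F k.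
Proof.
move=> ca Fz; rewrite -(subnKC ca) big_split_ord /= [X in _ + X]big1 ?addn0 // => i _.
by apply: Fz; rewrite leq_addr.
Qed.

Lemma sum_ord_delta M x (G : nat -> nat) :
  \sum_(i < M.+1) (x == i :> nat) * G i = if x <= M then G x else 0.
Proof.
case: leqP => h.
  rewrite (bigD1 (Ordinal (h : x < M.+1))) //= eqxx mul1n big1 ?addn0 // => i /eqP ne.
  by case: eqP => // e; case: ne; apply: val_inj.
by rewrite big1 // => i _; case: eqP => // e; move: (ltn_ord i); rewrite -e; lia.
Qed.

Lemma leq_weight_term N (h : nat -> nat) i : i <= N -> i * h i <= \sum_(i < N.+1) i * h i.
Proof. by move=> iN; rewrite (bigD1 (Ordinal (iN : i < N.+1))) //= leq_addr. Qed.

Lemma multfun_of_sum N w (h : nat -> nat) : (forall i, N < i -> h i = 0) -> h 0 = 0 ->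
  \sum_(i < N.+1) i * h i = w -> multfun w h.
Proof.
move=> hN h0 hs.
have hw i : w < i -> h i = 0.
  move=> wi; case: (leqP i N) => iN; last exact: hN.
  have := leq_weight_term h iN; rewrite hs => le.
  by case: (h i) le => [//|x]; rewrite mulnS; lia.
have hz k : minn N w < k -> k * h k = 0.
  by rewrite gtn_min => /orP [] lt; [rewrite hN | rewrite hw]; rewrite ?muln0.
split => //; rewrite -[RHS]hs.
have trunc a : minn N w < a ->
    \sum_(i < a) i * h i = \sum_(i < (minn N w).+1) i * h i.
  by move=> lt; apply: (@sum_ord_trunc a _ (fun i => i * h i)) => // k; apply: hz.
by rewrite !trunc // ltnS ?geq_minl ?geq_minr.
Qed.

Lemma multfun_le n g : multfun n g -> forall i, g i <= n.
Proof.
case=> g0 gz gs i; case: (leqP i n) => iN; last by rewrite gz.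
case: i iN => [|i] iN; first by rewrite g0.
by have := leq_weight_term g iN; rewrite gs mulSn; lia.
Qed.

Lemma multfun_weight N n D : multfun n D -> n <= N -> \sum_(i < N.+1) i * D i = n.
Proof.
case=> _ Dz Ds nN; rewrite -[RHS]Ds (@sum_ord_trunc N.+1 n.+1 (fun i => i * D i)) //.
by move=> k h; rewrite Dz ?muln0.
Qed.

Lemma multfun_weight_uniq a b g : multfun a g -> multfun b g -> a = b.
Proof.
by move=> va vb; rewrite -(multfun_weight va (leq_addr b a)) (multfun_weight vb (leq_addl a b)).
Qed.

Lemma multfun_add a b E D :
  multfun a E -> multfun b D -> multfun (a + b) (fun i => E i + D i).
Proof.
move=> vE vD; case: (vE) => E0 Ez _; case: (vD) => D0 Dz _.
apply: (@multfun_of_sum (a + b)); first by move=> i h; rewrite Ez ?Dz //; lia.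
  by rewrite E0 D0.
under eq_bigr => i _ do rewrite mulnDr.
by rewrite big_split /= (multfun_weight vE) ?(multfun_weight vD) ?leq_addr ?leq_addl.
Qed.

Lemma multfun_mult n (la : partn n) : multfun n (mult la).
Proof.
case: la => f /= fp; have /andP [/eqP f0 /eqP fs] := fp; split.
- by rewrite /mult.
- by move=> i iN; rewrite /mult; case: ifP => // /andP [_ h]; lia.
rewrite -[in RHS]fs; apply: eq_bigr => i _; rewrite /mult /=.
case: (posnP i) => [-> //|ip].
by rewrite -ltnS ltn_ord inord_val.
Qed.

Lemma mult_inj n (la la' : partn n) : mult la =1 mult la' -> la = la'.
Proof.
case: la la' => [f fp] [f' fp'] /= e.
have /andP [/eqP f0 _] := fp; have /andP [/eqP f0' _] := fp'.
apply: val_inj => /=; apply/ffunP => i; apply: val_inj.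
case: (posnP i) => ip.
  have -> : i = ord0 by apply: val_inj.
  by rewrite f0 f0'.
by have := e i; rewrite /mult /= ip -ltnS ltn_ord /= !inord_val.
Qed.

Definition ffun_of_mult n (g : nat -> nat) : {ffun 'I_n.+1 -> 'I_n.+1} :=
  [ffun i : 'I_n.+1 => inord (g i)].

Lemma is_part_ffun_of_mult n g : multfun n g -> is_part (ffun_of_mult n g).
Proof.
move=> v; have le := multfun_le v; case: v => g0 _ gs; apply/andP; split.
  by apply/eqP/val_inj; rewrite /= ffunE /= g0 inordK.
by apply/eqP; rewrite -[in RHS]gs; apply/eq_bigr => i _; rewrite ffunE inordK // ltnS le.
Qed.

Lemma mult_insubd n g (la : partn n) :
  multfun n g -> mult (insubd la (ffun_of_mult n g)) =1 g.
Proof.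
move=> v i; have hp := is_part_ffun_of_mult v; rewrite /mult insubdK //.
case: (v) => g0 gz _; case: (posnP i) => [->|ip]; first by rewrite g0.
case: (leqP i n) => iN /=; last by rewrite gz.
by rewrite ffunE inordK ?inordK // ltnS ?(multfun_le v).
Qed.

Definition ones_partn n : partn n.
Proof.
exists (ffun_of_mult n (fun i => if i == 1 then n else 0)).
apply: is_part_ffun_of_mult; apply: (@multfun_of_sum n) => //.
- by move=> i ni; case: eqP => // e; move: ni; rewrite e; case: n.
case: n => [|n]; first by rewrite big_ord1.
rewrite big_ord_recl big_ord_recl /= big1 => [|i _]; last by rewrite muln0.
by rewrite /bump /=; lia.
Defined.

Definition partn_of_mult n g := insubd (ones_partn n) (ffun_of_mult n g).

Lemma order_conj (T1 T2 : finType) (f : T1 -> T1) (g : T2 -> T2) (h : T1 -> T2)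
    (S : pred T1) x :
  injective h -> S x -> (forall y, S y -> S (f y)) ->
  (forall y, S y -> g (h y) = h (f y)) ->
  order g (h x) = order f x.
Proof.
move=> hi Sx Sf com.
have it i : iter i g (h x) = h (iter i f x) /\ S (iter i f x).
  by elim: i => [|i [IH Si]] //=; rewrite IH com //; split => //; apply: Sf.
rewrite /order -(card_image hi (fconnect f x)); apply: eq_card => y.
apply/idP/imageP.
  move=> /iter_findex <-; rewrite (it _).1.
  by exists (iter (findex g (h x) y) f x) => //; apply: fconnect_iter.
by move=> [z zc ->]; rewrite -(iter_findex zc) -(it _).1; apply: fconnect_iter.
Qed.

Definition partn_add N a b (E : partn a) (D : partn b) : partn N :=
  partn_of_mult N (fun i => mult E i + mult D i).

Lemma mult_partn_add N a b (E : partn a) (D : partn b) :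
  a + b = N -> mult (partn_add N E D) =1 (fun i => mult E i + mult D i).
Proof. by move=> <-; apply/mult_insubd/multfun_add; apply: multfun_mult. Qed.

Lemma eq_multfun n g1 g2 : g1 =1 g2 -> multfun n g1 -> multfun n g2.
Proof.
move=> e [g0 gz gs]; split => [|i /gz|]; rewrite -?e //.
by rewrite -[RHS]gs; apply: eq_bigr => i _; rewrite e.
Qed.

Section Modulus.
Variable m : nat.
Hypothesis m_gt1 : 1 < m.
Let m_gt0 : 0 < m := ltnW m_gt1.

Lemma mval_dvd N : m ^ mval m N %| N.
Proof.
apply: (big_ind (fun x => m ^ x %| N)) => // x y hx hy.
by case: (leqP x y) => h; rewrite ?(maxn_idPr h) ?(maxn_idPl (ltnW h)).
Qed.

Lemma mval_max N k : k <= N -> m ^ k %| N -> k <= mval m N.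
Proof.
move=> kN hk; rewrite /mval.
exact: (@leq_bigmax_cond _ (fun i : 'I_N.+1 => m ^ i %| N) val (Ordinal (kN : k < N.+1))).
Qed.

Lemma mval_lt N : 0 < N -> mval m N < N.
Proof.
by move=> Np; have := dvdn_leq Np (mval_dvd N); have := ltn_expl (mval m N) m_gt1; lia.
Qed.

Lemma mval0 : mval m 0 = 0.
Proof. by apply: (big_ind (fun x => x = 0)) => [|x y -> ->|[[]]]. Qed.

Lemma mfree0 : mfree m 0 = 0.
Proof. exact: div0n. Qed.

Lemma mfreeK N : mfree m N * m ^ mval m N = N.
Proof. by rewrite /mfree divnK // mval_dvd. Qed.

Lemma mfree_le N : mfree m N <= N.
Proof. exact: leq_div. Qed.

Lemma mfree_ndvd N : 0 < N -> ~~ (m %| mfree m N).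
Proof.
move=> Np; apply/negP => /dvdnP [q hq].
have dv : m ^ (mval m N).+1 %| N.
  by rewrite -[X in _ %| X](mfreeK N) hq expnS dvdn_mul // dvdn_mull.
have := ltn_expl (mval m N).+1 m_gt1; have := dvdn_leq Np dv => le lt.
by have := mval_max (ltnW (leq_trans lt le)) dv; rewrite ltnn.
Qed.

Lemma mvalE j k : ~~ (m %| j) -> mval m (j * m ^ k) = k.
Proof.
move=> nd; have jp : 0 < j by case: j nd => //; rewrite dvdn0.
apply/eqP; rewrite eqn_leq; apply/andP; split; last first.
  apply: mval_max; last by rewrite dvdn_mull.
  by apply: leq_trans (ltnW (ltn_expl k m_gt1)) _; rewrite leq_pmull.
rewrite leqNgt; apply/negP => lt.
have : m ^ k.+1 %| j * m ^ k by apply: dvdn_trans (mval_dvd _); rewrite dvdn_exp2l.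
by rewrite expnSr mulnC dvdn_pmul2r ?expn_gt0 ?m_gt0 // (negbTE nd).
Qed.

Lemma mfreeE j k : ~~ (m %| j) -> mfree m (j * m ^ k) = j.
Proof. by move=> nd; rewrite /mfree mvalE // mulnK // expn_gt0 m_gt0. Qed.

Lemma mval_gt0_dvd i : 0 < mval m i -> m %| i.
Proof. by move=> h; apply: dvdn_trans (mval_dvd i); rewrite -(prednK h) expnS dvdn_mulr. Qed.

Lemma mfree_mval0 i : mval m i = 0 -> mfree m i = i.
Proof. by move=> h; rewrite /mfree h expn0 divn1. Qed.

Lemma mval_eq0 i : ~~ (m %| i) -> mval m i = 0.
Proof. by move=> nd; apply/eqP; rewrite -leqn0 leqNgt (contra (@mval_gt0_dvd i)). Qed.

Lemma eq_mul_expn j k i : ~~ (m %| j) -> 0 < i ->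
  (j * m ^ k == i) = (mfree m i == j) && (mval m i == k).
Proof.
move=> nd ip; apply/idP/idP; first by move=> /eqP <-; rewrite mfreeE // mvalE // !eqxx.
by move=> /andP [/eqP <- /eqP <-]; rewrite mfreeK.
Qed.

Lemma sum_mfree_mval M (F : nat -> nat) : F 0 = 0 -> (forall x, M < x -> F x = 0) ->
  \sum_(i < M.+1) F i =
  \sum_(j < M.+1 | ~~ (m %| j)) \sum_(k < M.+1) F (j * m ^ k).
Proof.
move=> F0 Fz.
have Fdelta j k : F (j * m ^ k) = \sum_(i < M.+1) (j * m ^ k == i) * F i.
  by rewrite sum_ord_delta; case: leqP => // h; apply: Fz.
under [RHS]eq_bigr => j _ do under eq_bigr => k _ do rewrite Fdelta.
under [RHS]eq_bigr => j _ do rewrite exchange_big /=.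
rewrite exchange_big /=; apply: eq_bigr => i _.
case: (posnP i) => [->|ip].
  by rewrite F0 big1 // => j _; rewrite big1 // => k _; rewrite muln0.
have iM : mval m i <= M /\ mfree m i <= M.
  by have := mval_lt ip; have := mfree_le i; have := ltn_ord i; lia.
under eq_bigr => j nd do under eq_bigr => k _ do
  rewrite eq_mul_expn // -mulnb -mulnA.
under eq_bigr => j _ do rewrite -big_distrr /= (sum_ord_delta M (mval m i) (fun _ => F i)).
rewrite iM.1 big_mkcond /=.
transitivity (\sum_(j < M.+1) (mfree m i == j) * (if ~~ (m %| j) then F i else 0)).
  by rewrite (sum_ord_delta M _ (fun j => if ~~ (m %| j) then F i else 0)) mfree_ndvd // iM.2.
by apply: eq_bigr => j _; case: ifP; rewrite ?muln0.
Qed.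

Lemma sum_digits L x : x < m ^ L -> \sum_(l < L) (x %/ m ^ l %% m) * m ^ l = x.
Proof.
elim: L x => [|L IH] x h; first by rewrite big_ord0; move: h; rewrite expn0; case: x.
rewrite big_ord_recl /= expn0 divn1 muln1.
under eq_bigr => l _ do rewrite /bump /= add1n expnS divnMA mulnCA.
rewrite -big_distrr /= IH; first by rewrite [in RHS](divn_eq x m); lia.
by rewrite ltn_divLR // -expnSr.
Qed.

Definition rot_antidiag (d : nat -> nat -> nat) k l :=
  if k is k'.+1 then d k' l.+1 else d l 0.

Lemma sum_rot_antidiag T (d : nat -> nat -> nat) :
  (forall k l, T <= k.+1 -> d k l = 0) -> (forall k l, T <= l.+1 -> d k l = 0) ->
  \sum_(k < T) \sum_(l < T) rot_antidiag d k l * m ^ (k + l) =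
  \sum_(k < T) \sum_(l < T) d k l * m ^ (k + l).
Proof.
case: T => [|T] dk dl; first by rewrite !big_ord0.
rewrite big_ord_recl /=.
under [in RHS]eq_bigr => k _ do rewrite big_ord_recl /=.
rewrite big_split /=; congr (_ + _).
  by apply: eq_bigr => k _; rewrite addn0.
transitivity (\sum_(k < T) \sum_(l < T) d k l.+1 * m ^ (k.+1 + l)).
  by apply: eq_bigr => k _; rewrite big_ord_recr /= dl ?mul0n ?addn0.
rewrite [in RHS]big_ord_recr /= [X in _ = _ + X]big1 ?addn0 => [|l _]; last by rewrite dk.
by apply: eq_bigr => k _; apply: eq_bigr => l _; rewrite /bump /= add1n addnS.
Qed.

Lemma pfm_eq0_col n g j k l : multfun n g -> n <= l -> pfm m g j k l = 0.
Proof.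
move=> v nl; rewrite /pfm divn_small ?mod0n //.
exact: leq_ltn_trans (multfun_le v _) (leq_ltn_trans nl (ltn_expl l m_gt1)).
Qed.

Lemma pfm_eq0_row n g j k l : multfun n g -> 0 < j -> n <= k -> pfm m g j k l = 0.
Proof.
move=> [_ gz _] jp nk; rewrite /pfm gz ?div0n ?mod0n //.
apply: leq_ltn_trans nk (leq_trans (ltn_expl k m_gt1) _).
by rewrite leq_pmull.
Qed.

Lemma pfm_rot_eq0 n g j k l : multfun n g -> n <= l -> pfm_rot m g j k l = 0.
Proof.
move=> v nl; case: k => [|k] /=; last by apply: (pfm_eq0_col _ _ v); apply: ltnW.
case: (posnP j) => [->|jp]; last exact: pfm_eq0_row v jp nl.
by case: v => g0 _ _; rewrite /pfm mul0n g0 div0n mod0n.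
Qed.

Lemma rho_mult_expand n g j k M : multfun n g -> ~~ (m %| j) -> n <= M ->
  rho_mult m n g (j * m ^ k) = \sum_(l < M.+1) rot_antidiag (pfm m g j) k l * m ^ l.
Proof.
move=> v nd nM; have vanish l : n <= l -> pfm_rot m g j k l * m ^ l = 0.
  by move=> nl; rewrite (pfm_rot_eq0 _ _ v nl).
rewrite /rho_mult mvalE // mfreeE // (@sum_ord_trunc _ n (fun l => pfm_rot m g j k l * m ^ l)) //.
by rewrite [RHS](@sum_ord_trunc _ n (fun l => pfm_rot m g j k l * m ^ l)) // ltnW.
Qed.

Lemma mult_expand n g j k M : multfun n g -> n <= M ->
  g (j * m ^ k) = \sum_(l < M.+1) pfm m g j k l * m ^ l.
Proof.
move=> v nM; rewrite /pfm sum_digits //.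
exact: leq_ltn_trans (multfun_le v _) (leq_ltn_trans nM (ltn_trans (ltnSn M) (ltn_expl _ m_gt1))).
Qed.

(* The rotation only permutes the entries within each antidiagonal of [M_j], and all
   entries of an antidiagonal carry the same weight [j * m^(k + l)]. *)
Lemma rho_block_weight n g j M : multfun n g -> ~~ (m %| j) -> n < M ->
  \sum_(k < M) j * m ^ k * rho_mult m n g (j * m ^ k) =
  \sum_(k < M) j * m ^ k * g (j * m ^ k).
Proof.
move=> v nd nM; have jp : 0 < j by case: j nd => //; rewrite dvdn0.
case: M nM => // M; rewrite ltnS => nM.
transitivity (j * \sum_(k < M.+1) \sum_(l < M.+1) rot_antidiag (pfm m g j) k l * m ^ (k + l)).
  rewrite big_distrr; apply: eq_bigr => k _ /=.
  rewrite (rho_mult_expand k v nd nM) -mulnA !big_distrr.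
  by apply: eq_bigr => l _ /=; rewrite expnD; lia.
rewrite sum_rot_antidiag => [|k l h|k l h]; last 2 first.
- by apply: (pfm_eq0_row _ v jp); lia.
- by apply: (pfm_eq0_col _ _ v); lia.
rewrite big_distrr; apply: eq_bigr => k _ /=.
rewrite (mult_expand _ _ v nM) -mulnA !big_distrr.
by apply: eq_bigr => l _ /=; rewrite expnD; lia.
Qed.

Lemma rho_mult0 n g : g 0 = 0 -> rho_mult m n g 0 = 0.
Proof.
move=> g0; rewrite /rho_mult mval0 mfree0 big1 // => l _.
by rewrite /= /pfm mul0n g0 div0n mod0n.
Qed.

Lemma rho_mult_eq0 n g i : multfun n g -> m * n < i -> rho_mult m n g i = 0.
Proof.
case=> _ gz _ lt; have ip : 0 < i by apply: leq_ltn_trans lt.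
rewrite /rho_mult big1 // => l _; have iE := mfreeK i.
case: (mval m i) iE => [|k] iE /=; rewrite /pfm gz ?div0n ?mod0n ?mul0n //.
  rewrite muln1 in iE; rewrite iE.
  have : i <= i * m ^ l by rewrite leq_pmulr // expn_gt0 m_gt0.
  by have := leq_pmull n m_gt0; lia.
by rewrite -(ltn_pmul2l m_gt0) mulnCA -expnS iE.
Qed.

Lemma multfun_rho n g : multfun n g -> multfun n (rho_mult m n g).
Proof.
move=> v; case: (v) => g0 gz _; set M := m * n.
have nM : n <= M by apply: leq_pmull.
apply: (@multfun_of_sum M) => [i||]; first exact: rho_mult_eq0.
  exact: rho_mult0.
have rho_out x : M < x -> x * rho_mult m n g x = 0 by move=> Mx; rewrite rho_mult_eq0 ?muln0.
have g_out x : M < x -> x * g x = 0.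
  by move=> Mx; rewrite gz ?muln0 //; apply: leq_ltn_trans Mx.
rewrite (@sum_mfree_mval M (fun i => i * rho_mult m n g i)) //.
under eq_bigr => j nd do rewrite (rho_block_weight v nd) ?ltnS //.
by rewrite -(@sum_mfree_mval M (fun i => i * g i)) // (multfun_weight v).
Qed.

Lemma mult_rho n (la : partn n) : mult (rho m la) =1 rho_mult m n (mult la).
Proof.
have v := multfun_rho (multfun_mult la); rewrite /rho.
have -> : rho_ffun m la = ffun_of_mult n (rho_mult m n (mult la)).
  apply/ffunP => i; rewrite !ffunE; case: eqP => // ->.
  by apply: val_inj; rewrite /= rho_mult0 ?inordK //; case: (multfun_mult la).
exact: mult_insubd.
Qed.

Lemma rho_mult_ext n g1 g2 : g1 =1 g2 -> rho_mult m n g1 =1 rho_mult m n g2.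
Proof.
move=> e i; rewrite /rho_mult; apply: eq_bigr => l _.
by rewrite /pfm_rot /pfm; case: (mval m i) => [|k]; rewrite e.
Qed.

Lemma rho_mult_trunc n n' g : multfun n g -> n <= n' -> rho_mult m n' g =1 rho_mult m n g.
Proof.
move=> v le i; have vanish l : n <= l -> pfm_rot m g (mfree m i) (mval m i) l * m ^ l = 0.
  by move=> nl; rewrite (pfm_rot_eq0 _ _ v nl).
rewrite /rho_mult (@sum_ord_trunc _ n (fun l => pfm_rot m g (mfree m i) (mval m i) l * m ^ l)) //.
  by rewrite [RHS](@sum_ord_trunc _ n (fun l => pfm_rot m g (mfree m i) (mval m i) l * m ^ l)).
exact: leqW.
Qed.

Definition mdiv_mults (g : nat -> nat) := forall i, ~~ (m %| i) -> m %| g i.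

Definition digit_mults (g : nat -> nat) := forall i, g i < m /\ (m %| i -> g i = 0).

Lemma rho_mdiv_mults n g : mdiv_mults g -> mdiv_mults (rho_mult m n g).
Proof.
move=> hE i nd; rewrite /rho_mult mval_eq0 // mfree_mval0 ?mval_eq0 // big_ord_recl.
apply: dvdn_add.
  by rewrite /= /pfm expn0 muln1 divn1 muln1; move/dvdnP: (hE _ nd) => [q ->]; rewrite modnMl.
by apply: dvdn_sum => l _; rewrite /bump /= expnS mulnCA dvdn_mulr.
Qed.

Lemma pfm_add_digits E D j k l : mdiv_mults E -> digit_mults D ->
  pfm m (fun x => E x + D x) j k l = pfm m E j k l + (l == 0) * D (j * m ^ k).
Proof.
move=> hE hD; rewrite /pfm; set x := j * m ^ k; have [Dm Dx] := hD x.
case: (boolP (m %| x)) => [/Dx -> | nd]; first by rewrite muln0 !addn0.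
have [q ->] := dvdnP (hE _ nd); case: l => [|l].
  by rewrite expn0 !divn1 modnMDl modnMl mul1n modn_small.
by rewrite expnS !divnMA divnMDl // (divn_small Dm) addn0 mulnK // mul0n addn0.
Qed.

Lemma rho_mult_add_digits n nE E D : multfun nE E -> nE <= n ->
  mdiv_mults E -> digit_mults D ->
  forall i, rho_mult m n (fun x => E x + D x) i = rho_mult m nE E i + D i.
Proof.
move=> vE le hE hD i; rewrite -(rho_mult_trunc vE le i) /rho_mult /pfm_rot.
case k: (mval m i) => [|k'].
  under eq_bigr => l _ do rewrite pfm_add_digits // mulnDl.
  rewrite big_split /=; congr (_ + _); rewrite big_ord_recl big1 => [|l _].
    by rewrite /= mul1n expn0 !muln1 addn0 mfree_mval0.
  rewrite /= mfree_mval0 // mul1n; have [_ ->] := hD (i * m ^ l.+1) => //.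
  by rewrite expnS mulnCA dvdn_mulr.
under eq_bigr => l _ do rewrite pfm_add_digits // mul0n addn0.
by have [_ ->] := hD i; rewrite ?addn0 // mval_gt0_dvd ?k.
Qed.

(* The entries at position (0,0) of the matrices [M_j]. *)
Definition digit_part (g : nat -> nat) i := if m %| i then 0 else g i %% m.
Definition mdiv_part (g : nat -> nat) i := g i - digit_part g i.
Definition digit_weight N g := \sum_(i < N.+1) i * digit_part g i.

Lemma digit_part_le g i : digit_part g i <= g i.
Proof. by rewrite /digit_part; case: ifP => // _; apply: leq_mod. Qed.

Lemma mdiv_digit_partK g i : mdiv_part g i + digit_part g i = g i.
Proof. by rewrite /mdiv_part subnK // digit_part_le. Qed.

Lemma digit_mults_part g : digit_mults (digit_part g).
Proof. by move=> i; rewrite /digit_part; case: ifP => h; split; rewrite ?ltn_mod. Qed.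

Lemma mdiv_mults_part g : mdiv_mults (mdiv_part g).
Proof.
move=> i nd; rewrite /mdiv_part /digit_part (negbTE nd) {1}(divn_eq (g i) m) addnK.
exact: dvdn_mull.
Qed.

Lemma digit_part_ext g1 g2 : g1 =1 g2 -> digit_part g1 =1 digit_part g2.
Proof. by move=> e i; rewrite /digit_part e. Qed.

Lemma mdiv_part_ext g1 g2 : g1 =1 g2 -> mdiv_part g1 =1 mdiv_part g2.
Proof. by move=> e i; rewrite /mdiv_part (digit_part_ext e) e. Qed.

Lemma digit_part_add E D : mdiv_mults E -> digit_mults D ->
  digit_part (fun i => E i + D i) =1 D.
Proof.
move=> hE hD i; have [Dm Dx] := hD i; rewrite /digit_part; case: ifP => [/Dx //|/negbT nd].
by have [q ->] := dvdnP (hE _ nd); rewrite modnMDl modn_small.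
Qed.

Lemma mdiv_part_add E D : mdiv_mults E -> digit_mults D ->
  mdiv_part (fun i => E i + D i) =1 E.
Proof. by move=> hE hD i; rewrite /mdiv_part digit_part_add // addnK. Qed.

Lemma digit_weight_le N g : multfun N g -> digit_weight N g <= N.
Proof.
case=> _ _ gs; rewrite -[X in _ <= X]gs; apply: leq_sum => i _.
by rewrite leq_mul2l digit_part_le orbT.
Qed.

Lemma multfun_digit_part N g : multfun N g -> multfun (digit_weight N g) (digit_part g).
Proof.
move=> [g0 gz _]; apply: (@multfun_of_sum N) => //.
  by move=> i iN; rewrite /digit_part (gz _ iN) mod0n; case: ifP.
by rewrite /digit_part dvdn0.
Qed.

Lemma multfun_mdiv_part N g : multfun N g -> multfun (N - digit_weight N g) (mdiv_part g).
Proof.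
move=> [g0 gz gs]; apply: (@multfun_of_sum N).
- by move=> i iN; rewrite /mdiv_part gz.
- by rewrite /mdiv_part g0.
have : \sum_(i < N.+1) i * mdiv_part g i + digit_weight N g = N.
  by rewrite -big_split /= -[RHS]gs; apply: eq_bigr => i _; rewrite -mulnDr mdiv_digit_partK.
by rewrite /digit_weight; lia.
Qed.

Lemma dvdn_mdiv_weight N g : multfun N g -> m %| N - digit_weight N g.
Proof.
move=> v; case: (multfun_mdiv_part v) => _ _ <-; apply: dvdn_sum => i _.
by case: (boolP (m %| i)) => h; [apply: dvdn_mulr | apply/dvdn_mull/mdiv_mults_part].
Qed.

Definition mdiv_partn n (E : partn n) : bool :=
  [forall i : 'I_n.+1, (m %| i) || (m %| mult E i)].
Definition digit_partn n (D : partn n) : bool :=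
  [forall i : 'I_n.+1, (mult D i < m) && ((m %| i) ==> (mult D i == 0))].
Definition digit_count r := #|[pred D : partn r | digit_partn D]|.

Lemma mdiv_partnP n (E : partn n) : reflect (mdiv_mults (mult E)) (mdiv_partn E).
Proof.
apply: (iffP forallP) => h; last by move=> i; case: (boolP (m %| i)) => //= nd; apply: h.
move=> i nd; case: (leqP i n) => iN; last by case: (multfun_mult E) => _ Ez _; rewrite Ez.
by have := h (Ordinal (iN : i < n.+1)); rewrite /= (negbTE nd).
Qed.

Lemma digit_partnP n (D : partn n) : reflect (digit_mults (mult D)) (digit_partn D).
Proof.
apply: (iffP forallP) => h; last first.
  by move=> i; case: (h i) => -> di; apply/implyP => /di ->.
move=> i; case: (leqP i n) => iN; last by case: (multfun_mult D) => _ Dz _; rewrite Dz // ltnW.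
have /andP [-> /implyP di] := h (Ordinal (iN : i < n.+1)).
by split => // /di /eqP.
Qed.

Definition mdiv_size N (la : partn N) := (N - digit_weight N (mult la)) %/ m.

Lemma partn_add_inj N a b (E1 E2 : partn a) (D1 D2 : partn b) : a + b = N ->
  mdiv_partn E1 -> digit_partn D1 -> mdiv_partn E2 -> digit_partn D2 ->
  partn_add N E1 D1 = partn_add N E2 D2 -> E1 = E2 /\ D1 = D2.
Proof.
move=> eN /mdiv_partnP e1 /digit_partnP d1 /mdiv_partnP e2 /digit_partnP d2 h.
have hm i : mult E1 i + mult D1 i = mult E2 i + mult D2 i.
  by rewrite -(mult_partn_add E1 D1 eN i) h (mult_partn_add E2 D2 eN).
split; apply: mult_inj => i.
  by rewrite -(mdiv_part_add e1 d1 i) -(mdiv_part_add e2 d2 i); apply: mdiv_part_ext.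
by rewrite -(digit_part_add e1 d1 i) -(digit_part_add e2 d2 i); apply: digit_part_ext.
Qed.

Lemma mdiv_size_add N t (E : partn (m * t)) (D : partn (N - m * t)) : m * t <= N ->
  mdiv_partn E -> digit_partn D -> mdiv_size (partn_add N E D) = t.
Proof.
move=> tN /mdiv_partnP hE /digit_partnP hD; have eN : m * t + (N - m * t) = N by lia.
rewrite /mdiv_size; suff -> : digit_weight N (mult (partn_add N E D)) = N - m * t.
  by rewrite subKn // mulKn.
apply: etrans (multfun_weight (multfun_mult D) (leq_subr _ N)).
by apply: eq_bigr => i _; rewrite (digit_part_ext (mult_partn_add E D eN)) digit_part_add.
Qed.

Lemma mdiv_size_le N (la : partn N) : m * mdiv_size la <= N.
Proof. by rewrite mulnC; apply: leq_trans (leq_divM _ _) (leq_subr _ _). Qed.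

Lemma partn_add_split N t (la : partn N) : mdiv_size la = t ->
  exists (E : partn (m * t)) (D : partn (N - m * t)),
    [/\ mdiv_partn E, digit_partn D, mult E =1 mdiv_part (mult la) & la = partn_add N E D].
Proof.
move=> tla; have vg := multfun_mult la; set g := mult la.
have ew : N - digit_weight N g = m * t.
  by rewrite -tla mulnC divnK // dvdn_mdiv_weight.
have vE : multfun (m * t) (mdiv_part g) by rewrite -ew; apply: multfun_mdiv_part.
have vD : multfun (N - m * t) (digit_part g).
  by rewrite -ew subKn ?digit_weight_le //; apply: multfun_digit_part.
exists (partn_of_mult _ (mdiv_part g)), (partn_of_mult _ (digit_part g)).
have multE := mult_insubd (ones_partn _) vE; have multD := mult_insubd (ones_partn _) vD.
split.
- by apply/mdiv_partnP => i; rewrite multE; apply: mdiv_mults_part.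
- by apply/digit_partnP => i; rewrite multD; apply: digit_mults_part.
- exact: multE.
apply: mult_inj => i; rewrite mult_partn_add ?multE ?multD ?mdiv_digit_partK //.
by have := mdiv_size_le la; rewrite tla; lia.
Qed.

Definition mdiv_invariant N (P : pred (partn N)) (Q : forall t, pred (partn (m * t))) :=
  forall (la : partn N) t (E : partn (m * t)), mult E =1 mdiv_part (mult la) -> P la = Q t E.

Lemma card_mdiv_size_fiber N (P : pred (partn N)) (Q : forall t, pred (partn (m * t))) t :
  mdiv_invariant P Q -> m * t <= N ->
  #|[pred la : partn N | P la && (mdiv_size la == t)]| =
  #|[pred E : partn (m * t) | mdiv_partn E && Q t E]| * digit_count (N - m * t).
Proof.
move=> PQ tN; have eN : m * t + (N - m * t) = N by lia.
pose B := [pred ED : partn (m * t) * partn (N - m * t) |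
            [&& mdiv_partn ED.1, Q t ED.1 & digit_partn ED.2]].
have -> : #|[pred E | mdiv_partn E && Q t E]| * digit_count (N - m * t) = #|B|.
  rewrite /digit_count -sum1_card big_distrl /=.
  under eq_bigr => E _ do rewrite mul1n -sum1_card.
  by rewrite pair_big /= -sum1_card; apply: eq_bigl => -[E D]; rewrite !inE /= -andbA.
pose join (ED : partn (m * t) * partn (N - m * t)) := partn_add N ED.1 ED.2.
have join_inj : {in B &, injective join}.
  move=> [E1 D1] [E2 D2] /and3P [e1 _ d1] /and3P [e2 _ d2] /(partn_add_inj eN e1 d1 e2 d2).
  by case=> /= -> ->.
rewrite -(card_in_image join_inj); apply: eq_card => la; apply/idP/imageP.
  case/andP=> Pla /eqP /partn_add_split [E [D [hE hD multE ->]]].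
  by exists (E, D) => //; rewrite inE /= hE hD -(PQ _ _ _ multE) Pla.
move=> [[E D] /and3P [hE hQ hD] ->]; rewrite inE /= mdiv_size_add // eqxx andbT.
by rewrite (PQ _ t E) // => i; rewrite (mdiv_part_ext (mult_partn_add E D eN))
  (mdiv_part_add (elimT (mdiv_partnP _) hE) (elimT (digit_partnP _) hD)).
Qed.

Lemma card_mdiv_split N (P : pred (partn N)) (Q : forall t, pred (partn (m * t))) :
  mdiv_invariant P Q -> #|P| =
  \sum_(t < N.+1 | m * t <= N)
    #|[pred E : partn (m * t) | mdiv_partn E && Q t E]| * digit_count (N - m * t).
Proof.
move=> PQ; pose size_ord (la : partn N) : 'I_N.+1 := inord (mdiv_size la).
have size_ordE la : size_ord la = mdiv_size la :> nat.
  by rewrite inordK // ltnS; apply: leq_trans (mdiv_size_le la); rewrite leq_pmull.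
rewrite -sum1_card (partition_big size_ord (fun t : 'I_N.+1 => m * t <= N)) => [|la _];
  last by rewrite size_ordE mdiv_size_le.
apply: eq_bigr => t tN; rewrite -(card_mdiv_size_fiber PQ tN) sum1_card.
by apply: eq_card => la; rewrite unfold_in /= -val_eqE /= size_ordE.
Qed.

Lemma mdiv_partn_rho n (E : partn n) : mdiv_partn E -> mdiv_partn (rho m E).
Proof.
by move=> /mdiv_partnP hE; apply/mdiv_partnP => i; rewrite mult_rho; apply: rho_mdiv_mults.
Qed.

Lemma rho_partn_add N a b (E : partn a) (D : partn b) : a + b = N ->
  mdiv_partn E -> digit_partn D -> rho m (partn_add N E D) = partn_add N (rho m E) D.
Proof.
move=> eN /mdiv_partnP hE /digit_partnP hD; apply: mult_inj => i.
rewrite mult_rho (rho_mult_ext _ (mult_partn_add E D eN)) mult_partn_add // mult_rho.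
by apply: rho_mult_add_digits => //; [apply: multfun_mult | rewrite -eN leq_addr].
Qed.

Lemma order_rho_partn_add N a b (E : partn a) (D : partn b) : a + b = N ->
  mdiv_partn E -> digit_partn D -> order (@rho m N) (partn_add N E D) = order (@rho m a) E.
Proof.
move=> eN hE hD; apply: (@order_conj _ _ _ _ (fun E' => partn_add N E' D) (@mdiv_partn a)) => //.
- move=> E1 E2 e; apply: mult_inj => i; apply/(@addIn (mult D i)).
  by rewrite -!(mult_partn_add _ D eN) e.
- exact: mdiv_partn_rho.
by move=> y hy; rewrite rho_partn_add.
Qed.

Lemma order_rho_mdiv_part N t (la : partn N) (E : partn (m * t)) :
  mult E =1 mdiv_part (mult la) -> order (@rho m N) la = order (@rho m (m * t)) E.
Proof.
move=> multE; have vg := multfun_mult la.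
have ew : N - digit_weight N (mult la) = m * t.
  exact: multfun_weight_uniq (multfun_mdiv_part vg) (eq_multfun multE (multfun_mult E)).
have tla : mdiv_size la = t by rewrite /mdiv_size ew mulKn.
have [E' [D [hE' hD multE' ->]]] := partn_add_split tla.
have <- : E' = E by apply: mult_inj => i; rewrite multE multE'.
apply: order_rho_partn_add => //.
by have := mdiv_size_le la; rewrite tla; lia.
Qed.

(* The [&& true] matches the instance of [card_mdiv_split] that counts all partitions. *)
Lemma card_mdiv_partn0 n : n = 0 -> #|[pred E : partn n | mdiv_partn E && true]| = 1.
Proof.
move=> n0; have mult0 (E : partn n) : mult E =1 (fun=> 0).
  by move=> i; case: (multfun_mult E) => E0 Ez _; case: i => [//|i]; apply: Ez; rewrite n0.
rewrite -(card1 (ones_partn n)); apply: eq_card => E; rewrite !inE andbT.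
have -> : E = ones_partn n by apply: mult_inj => i; rewrite !mult0.
rewrite eqxx.
by apply/mdiv_partnP => i _; rewrite mult0 dvdn0.
Qed.

End Modulus.

Lemma leq_progression A B n s : B < A -> A * s <= A * n + B -> s <= n.
Proof.
move=> BA h; rewrite leqNgt; apply/negP => lt.
have : A * n.+1 <= A * s by rewrite leq_mul2l lt orbT.
nia.
Qed.

Lemma sub_mul_progression A B q n t : B < A -> q * A * t <= A * n + B ->
  A * n + B - q * A * t = A * (n - q * t) + B.
Proof.
move=> BA h; have qt : q * t <= n by apply: leq_progression BA _; nia.
rewrite mulnBr; nia.
Qed.

Lemma dvdn_digit_count m A B C : 1 < m -> B < A -> A %| m ->
  (forall n, C %| p (A * n + B)) -> forall n, C %| digit_count m (A * n + B).
Proof.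
move=> m_gt1 BA /dvdnP [q mE] Cp; elim/ltn_ind => n IH.
have := Cp n; rewrite /p (eq_card (B := @predT (partn (A * n + B)))) //.
rewrite (@card_mdiv_split _ m_gt1 _ _ (fun _ _ => true)) // (bigD1 ord0) ?muln0 //=.
rewrite card_mdiv_partn0 ?muln0 // mul1n subn0 dvdn_addl //.
apply: dvdn_sum => t /andP [tN t0]; apply: dvdn_mull.
rewrite mE sub_mul_progression -?mE //; apply: IH.
have tp : 0 < t by rewrite lt0n; apply: contra t0 => /eqP t0; apply/eqP/val_inj.
have qtp : 0 < q * t.
  by rewrite muln_gt0 tp andbT lt0n; apply: contraTneq m_gt1 => q0; rewrite mE q0.
have : q * t <= n by apply: leq_progression BA _; rewrite mE in tN; nia.
lia.
Qed.

Theorem theorem1 (m A B C : nat) :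
  2 <= m -> 1 <= A -> 1 <= C ->
  (forall n : nat, C %| p (A * n + B)) ->
  B < A -> A %| m ->
  forall k n : nat, 0 < k -> C %| p_rho m (A * n + B) k.
Proof.
move=> m_gt1 _ _ Cp BA Am k n _; have [q mE] := dvdnP Am.
rewrite /p_rho (@card_mdiv_split _ m_gt1 _ _ (fun t E => order (@rho m (m * t)) E == k));
  last by move=> la t E multE; rewrite /= (order_rho_mdiv_part m_gt1 multE).
apply: dvdn_sum => t tN; apply: dvdn_mull.
by rewrite mE sub_mul_progression -?mE //; apply: dvdn_digit_count.
Qed.
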